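(* Let $R_e\approx 1.4877$ be the unique positive root of $\frac{10}{7(R+1)}-\frac{R^2\sqrt{R}}{R^2+R+1}=0$. Define, for $x,y\ge 0$, $$d_0(x,y)=\frac{1+2x}{1+x}+\frac{xy}{1+y+xy},\quad d_1(x,y)=-\frac{x}{1+x}-\frac{xy}{1+y+xy}-\frac{xy^2}{1+y+xy}\frac{1+x}{1+y},\quad d_2(x,y)=\frac{xy^2}{1+y+xy}\frac{1+x}{1+y},$$ and, for $0<x,y,z<R_e$, $$d_*(x,y)=-\tfrac{10}{7}\sqrt{x}\,d_1(x,y)-\sqrt{xy}\,d_2(x,y),$$ $$p(x,y,z)=2d_0(y,z)-\sqrt{yz}\,d_2(y,z)-\tfrac{49}{100}d_*(y,z)-d_*(x,y),\qquad q(x,y,z)=d_*(y,z)-\sqrt{xy}\,d_2(x,y).$$ Let $\tau_k>0$ ($k\ge 1$) be time-step sizes with step ratios $r_k=\tau_k/\tau_{k-1}$ satisfying $0<r_k<R_e$ for all $k\ge 2$, and set $d^{(n)}_j=d_j(r_n,r_{n-1})$ for $j=0,1,2$. Then for every $n\ge 3$ and all real numbers $v_{n-2},v_{n-1},v_n$, $$2v_n\tau_n\big(d^{(n)}_0v_n+d^{(n)}_1v_{n-1}+d^{(n)}_2v_{n-2}\big)=G[v_n,v_{n-1}]-G[v_{n-1},v_{n-2}]+F[v_n,v_{n-1},v_{n-2}],$$ where $$G[v_n,v_{n-1}]=d_*(r_{n+1},r_n)\tau_nv_n^2+\sqrt{r_{n+1}r_n}\,d_2(r_{n+1},r_n)\big(\tfrac{7}{10}\sqrt{\tau_n}v_n-\sqrt{\tau_{n-1}}v_{n-1}\big)^2$$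 (and $G[v_{n-1},v_{n-2}]$ is the same expression with $n$ replaced by $n-1$), $$F[v_n,v_{n-1},v_{n-2}]=p(r_{n+1},r_n,r_{n-1})\tau_nv_n^2+q(r_{n+1},r_n,r_{n-1})\big(\tfrac{7}{10}\sqrt{\tau_n}v_n-\sqrt{\tau_{n-1}}v_{n-1}\big)^2+\sqrt{r_nr_{n-1}}\,d_2(r_n,r_{n-1})\big(\sqrt{\tau_n}v_n-\tfrac{7}{10}\sqrt{\tau_{n-1}}v_{n-1}+\sqrt{\tau_{n-2}}v_{n-2}\big)^2,$$ the functionals $G$ and $F$ are nonnegative, and $F[v_n,v_{n-1},v_{n-2}]\ge \frac{\tau_n}{50}v_n^2$.
   Context: The quantities $d^{(n)}_j$ are the variable-step BDF3 kernels: the BDF3 formula is $D_3v^n=\sum_{j=1}^n d^{(n)}_{n-j}\partial_\tau v^j$ with $\partial_\tau v^j=(v^j-v^{j-1})/\tau_j$, $d^{(n)}_j=d_j(r_n,r_{n-1})$ for $j=0,1,2$ and $d^{(n)}_j=0$ for $j\ge 3$. *)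

From Stdlib Require Import Reals Lra.
Open Scope R_scope.

Definition Re_eq (R0 : R) : R :=
  10 / (7 * (R0 + 1)) - R0 ^ 2 * sqrt R0 / (R0 ^ 2 + R0 + 1).

Definition kd0 (x y : R) : R := (1 + 2 * x) / (1 + x) + x * y / (1 + y + x * y).
Definition kd1 (x y : R) : R :=
  - (x / (1 + x)) - x * y / (1 + y + x * y)
  - x * y ^ 2 / (1 + y + x * y) * ((1 + x) / (1 + y)).
Definition kd2 (x y : R) : R := x * y ^ 2 / (1 + y + x * y) * ((1 + x) / (1 + y)).

Definition dstar (x y : R) : R :=
  - (10 / 7) * sqrt x * kd1 x y - sqrt (x * y) * kd2 x y.

Definition pf (x y z : R) : R :=
  2 * kd0 y z - sqrt (y * z) * kd2 y z - (49 / 100) * dstar y z - dstar x y.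
Definition qf (x y z : R) : R := dstar y z - sqrt (x * y) * kd2 x y.

Definition ratio (tau : nat -> R) (k : nat) : R := tau k / tau (k - 1)%nat.

(* G[v_n, v_{n-1}] with index n, a = v_n, b = v_{n-1} *)
Definition Gfun (tau : nat -> R) (n : nat) (a b : R) : R :=
  dstar (ratio tau (S n)) (ratio tau n) * tau n * a ^ 2
  + sqrt (ratio tau (S n) * ratio tau n) * kd2 (ratio tau (S n)) (ratio tau n)
    * ((7 / 10) * sqrt (tau n) * a - sqrt (tau (n - 1)%nat) * b) ^ 2.

(* F[v_n, v_{n-1}, v_{n-2}] with a = v_n, b = v_{n-1}, c = v_{n-2} *)
Definition Ffun (tau : nat -> R) (n : nat) (a b c : R) : R :=
  pf (ratio tau (S n)) (ratio tau n) (ratio tau (n - 1)%nat) * tau n * a ^ 2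
  + qf (ratio tau (S n)) (ratio tau n) (ratio tau (n - 1)%nat)
    * ((7 / 10) * sqrt (tau n) * a - sqrt (tau (n - 1)%nat) * b) ^ 2
  + sqrt (ratio tau n * ratio tau (n - 1)%nat) * kd2 (ratio tau n) (ratio tau (n - 1)%nat)
    * (sqrt (tau n) * a - (7 / 10) * sqrt (tau (n - 1)%nat) * b
       + sqrt (tau (n - 2)%nat) * c) ^ 2.

From Stdlib Require Import Reals Lra Lia Psatz.
Open Scope R_scope.

(* Writing the step ratios as squares X^2, Y^2, Z^2 makes every coefficient a
   rational function of X, Y, Z.  The energy identity is then a field identity
   (the next ratio x cancels between G and F).  Nonnegativity of d_* only needs
   sqrt y <= 10/7.  For q, R_e is exactly the threshold below which
   X d_2(X^2, Y^2) <= 10/7 Y^2/(1+Y^2), the part of d_*(Y^2, Z^2)/Y that does not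
   depend on Z.  For p, monotonicity in X and Z reduces the bound p >= 1/50 to two
   univariate polynomial inequalities on [0, rho], rho > sqrt R_e, certified by
   Bernstein expansions with positive coefficients. *)

Lemma Rdiv_ge0 a b : 0 <= a -> 0 < b -> 0 <= a / b.
Proof. intros Ha Hb. apply Rle_mult_inv_pos; lra. Qed.

Lemma Rdiv_le_cross a b c d : 0 < b -> 0 < d -> a * d <= c * b -> a / b <= c / d.
Proof.
  intros Hb Hd H.
  assert (E : c / d - a / b = (c * b - a * d) / (b * d)) by (field; lra).
  assert (0 <= (c * b - a * d) / (b * d)) by (apply Rdiv_ge0; nra).
  lra.
Qed.

Lemma kd2_ge0 x y : 0 <= x -> 0 <= y -> 0 <= kd2 x y.
Proof. intros. unfold kd2. apply Rmult_le_pos; apply Rdiv_ge0; nra. Qed.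

Lemma kd2_monotone_l x x' y : 0 <= x -> x <= x' -> 0 <= y -> kd2 x y <= kd2 x' y.
Proof.
  intros. unfold kd2. apply Rmult_le_compat.
  - apply Rdiv_ge0; nra.
  - apply Rdiv_ge0; nra.
  - apply Rdiv_le_cross; [nra | nra |].
    assert (0 <= (x' - x) * (y ^ 2 * (1 + y))) by (apply Rmult_le_pos; nra).
    nra.
  - apply Rdiv_le_cross; nra.
Qed.

Lemma dstar_sqr X Y : 0 < X -> 0 < Y ->
  dstar (X * X) (Y * Y) =
  10 / 7 * X * (X * X / (1 + X * X) + X * X * (Y * Y) / (1 + Y * Y + X * X * (Y * Y)))
  + X * kd2 (X * X) (Y * Y) * (10 / 7 - Y).
Proof.
  intros. unfold dstar, kd1, kd2.
  rewrite (sqrt_mult (X * X) (Y * Y)), !sqrt_square by nra. ring.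
Qed.

Lemma dstar_sqr_ge0 X Y : 0 < X -> 0 < Y -> Y <= 10 / 7 -> 0 <= dstar (X * X) (Y * Y).
Proof.
  intros. rewrite dstar_sqr by lra.
  assert (0 <= X * X / (1 + X * X)) by (apply Rdiv_ge0; nra).
  assert (0 <= X * X * (Y * Y) / (1 + Y * Y + X * X * (Y * Y))) by (apply Rdiv_ge0; nra).
  assert (0 <= X * kd2 (X * X) (Y * Y)) by (apply Rmult_le_pos; [lra | apply kd2_ge0; nra]).
  nra.
Qed.

Lemma dstar_sqr_monotone_l X X' Y : 0 < X -> X <= X' -> 0 < Y -> Y <= 10 / 7 ->
  dstar (X * X) (Y * Y) <= dstar (X' * X') (Y * Y).
Proof.
  intros. rewrite !dstar_sqr by lra.
  assert (X * X / (1 + X * X) <= X' * X' / (1 + X' * X')) by (apply Rdiv_le_cross; nra).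
  assert (X * X * (Y * Y) / (1 + Y * Y + X * X * (Y * Y))
          <= X' * X' * (Y * Y) / (1 + Y * Y + X' * X' * (Y * Y))).
  { apply Rdiv_le_cross; [nra | nra |].
    assert (0 <= (X' * X' - X * X) * (Y * Y * (1 + Y * Y))) by (apply Rmult_le_pos; nra).
    nra. }
  assert (kd2 (X * X) (Y * Y) <= kd2 (X' * X') (Y * Y)) by (apply kd2_monotone_l; nra).
  assert (0 <= X * X / (1 + X * X)) by (apply Rdiv_ge0; nra).
  assert (0 <= X * X * (Y * Y) / (1 + Y * Y + X * X * (Y * Y))) by (apply Rdiv_ge0; nra).
  assert (0 <= kd2 (X * X) (Y * Y)) by (apply kd2_ge0; nra).
  apply Rplus_le_compat.
  - apply Rmult_le_compat; lra.
  - apply Rmult_le_compat_r; [lra |]. apply Rmult_le_compat; lra.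
Qed.

Lemma Re_eq_sqrt Re : 0 < Re -> Re_eq Re = 0 ->
  7 * (sqrt Re ^ 2 + 1) * sqrt Re ^ 5 = 10 * (sqrt Re ^ 4 + sqrt Re ^ 2 + 1).
Proof.
  intros Hpos Hroot.
  assert (E : 10 * (Re ^ 2 + Re + 1) - 7 * (Re + 1) * (Re ^ 2 * sqrt Re)
              = Re_eq Re * (7 * (Re + 1) * (Re ^ 2 + Re + 1))).
  { unfold Re_eq. field. nra. }
  rewrite Hroot, Rmult_0_l in E.
  assert (HS : Re = sqrt Re * sqrt Re) by (rewrite sqrt_sqrt; lra).
  set (S := sqrt Re) in *. clearbody S. subst Re.
  lra.
Qed.

(* sqrt R_e = 1.21971... *)
Notation rho := (6099 / 5000).

Lemma sqrt_Re_lt Re : 0 < Re -> Re_eq Re = 0 -> sqrt Re < rho.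
Proof.
  intros Hpos Hroot. pose proof (Re_eq_sqrt Re Hpos Hroot) as E.
  destruct (Rlt_or_le (sqrt Re) rho) as [Hlt | Hge]; [exact Hlt | exfalso].
  set (d := sqrt Re - rho) in *.
  assert (Hd : 0 <= d) by (unfold d; lra).
  replace (sqrt Re) with (rho + d) in E by (unfold d; ring).
  clearbody d.
  (* As a polynomial in d, 7 (S^2 + 1) S^5 - 10 (S^4 + S^2 + 1) has positive coefficients. *)
  assert (0 <= d ^ 2) by nra.
  assert (0 <= d ^ 3) by (apply pow_le; lra).
  assert (0 <= d ^ 4) by (apply pow_le; lra).
  assert (0 <= d ^ 5) by (apply pow_le; lra).
  assert (0 <= d ^ 6) by (apply pow_le; lra).
  assert (0 <= d ^ 7) by (apply pow_le; lra).
  ring_simplify in E. lra.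
Qed.

(* Equality holds at Y = S: that is the equation defining R_e. *)
Lemma kd2_sqr_le_root S Y : 0 < S -> 7 * (S ^ 2 + 1) * S ^ 5 = 10 * (S ^ 4 + S ^ 2 + 1) ->
  0 < Y <= S -> S * kd2 (S * S) (Y * Y) <= 10 / 7 * (Y * Y / (1 + Y * Y)).
Proof.
  intros HS Hroot HY.
  set (L := 10 / 7 + Y * Y * (1 + S * S) * (10 / 7 - S * S * S)).
  assert (HL : L * (S * S) = 10 / 7 * (S * S - Y * Y)) by (unfold L; nra).
  assert (0 <= L).
  { assert (0 <= L * (S * S)) by (rewrite HL; nra).
    apply (Rmult_le_reg_r (S * S)); nra. }
  assert (E : 10 / 7 * (Y * Y / (1 + Y * Y)) - S * kd2 (S * S) (Y * Y)
              = Y * Y * L / ((1 + Y * Y) * (1 + Y * Y + S * S * (Y * Y)))).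
  { unfold L, kd2. field. nra. }
  assert (0 <= Y * Y * L / ((1 + Y * Y) * (1 + Y * Y + S * S * (Y * Y))))
    by (apply Rdiv_ge0; nra).
  lra.
Qed.

Lemma qf_sqr_ge0 S X Y Z : 0 < S -> 7 * (S ^ 2 + 1) * S ^ 5 = 10 * (S ^ 4 + S ^ 2 + 1) ->
  0 < X <= S -> 0 < Y <= S -> 0 < Z <= 10 / 7 -> 0 <= qf (X * X) (Y * Y) (Z * Z).
Proof.
  intros HS Hroot HX HY HZ. unfold qf. rewrite dstar_sqr by lra.
  rewrite (sqrt_mult (X * X) (Y * Y)), !sqrt_square by nra.
  assert (X * kd2 (X * X) (Y * Y) <= S * kd2 (S * S) (Y * Y)).
  { apply Rmult_le_compat; [lra | apply kd2_ge0; nra | lra | apply kd2_monotone_l; nra]. }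
  pose proof (kd2_sqr_le_root S Y HS Hroot HY).
  assert (0 <= Y * Y * (Z * Z) / (1 + Z * Z + Y * Y * (Z * Z))) by (apply Rdiv_ge0; nra).
  assert (0 <= Y * kd2 (Y * Y) (Z * Z) * (10 / 7 - Z)).
  { apply Rmult_le_pos; [apply Rmult_le_pos; [lra | apply kd2_ge0; nra] | lra]. }
  nra.
Qed.

(* Coefficients in the Bernstein basis of [0, 1] of the numerators of
   pbase Y - 1/50 and pbase Y + pweight Y rho * pslope Y rho - 1/50,
   where Y = rho t. *)
Definition bern5 (t : R) : R :=
  (204161372631/217692303500) * (1 - t)^5
  + (204161372631/43538460700) * t * (1 - t)^4
  + (454553357352246820835900883/34014422421875000000000000) * t^2 * (1 - t)^3
  + (682441527818975862854515149/34014422421875000000000000) * t^3 * (1 - t)^2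
  + (124687076025978560943909759626848790211843/12148008007812500000000000000000000000000) * t^4 * (1 - t)
  + (71326111973454930368484989811801539001/9765625000000000000000000000000000000) * t^5.

Definition bern9 (t : R) : R :=
  (12698388426789784431/2187500000000000000) * (1 - t)^9
  + (114285495841108059879/2187500000000000000) * t * (1 - t)^8
  + (85390201487319353298146786970308283/341796875000000000000000000000000) * t^2 * (1 - t)^7
  + (147592956401962300058469464224526877/195312500000000000000000000000000) * t^3 * (1 - t)^6
  + (187660649860764275680153894809176878799078858757243/122070312500000000000000000000000000000000000000) * t^4 * (1 - t)^5
  + (13117536515288565417320920783794770951164920726575024601/6103515625000000000000000000000000000000000000000000) * t^5 * (1 - t)^4
  + (44235511218444191872870105692625865186172999535562496372501/21362304687500000000000000000000000000000000000000000000) * t^6 * (1 - t)^3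
  + (1380768007766661150490447674171800290731931051162640983632366807/1068115234375000000000000000000000000000000000000000000000000) * t^7 * (1 - t)^2
  + (33138495701977977319957875453311891630796900711717391577827401/76293945312500000000000000000000000000000000000000000000000) * t^8 * (1 - t)
  + (71412786472469019724358964211378573508769534665727035515367649/15258789062500000000000000000000000000000000000000000000000000) * t^9.

Ltac bernstein_ge0 :=
  repeat match goal with
  | |- 0 <= _ + _ => apply Rplus_le_le_0_compat
  | |- 0 <= _ * _ => apply Rmult_le_pos
  | |- 0 <= _ ^ _ => apply pow_le
  end; lra.

Lemma bern5_ge0 t : 0 <= t <= 1 -> 0 <= bern5 t.
Proof. intros. unfold bern5. bernstein_ge0. Qed.

Lemma bern9_ge0 t : 0 <= t <= 1 -> 0 <= bern9 t.
Proof. intros. unfold bern9. bernstein_ge0. Qed.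

(* pbase is the Z-free part of pf_sqr at its worst case X = rho. *)
Definition pbase (Y : R) : R :=
  2 + (2 - 7 / 10 * Y) * (Y * Y / (1 + Y * Y)) - dstar (rho * rho) (Y * Y).
Definition pweight (Y Z : R) : R := Y * Y * (Z * Z) / (1 + Z * Z + Y * Y * (Z * Z)).
Definition pslope (Y Z : R) : R :=
  2 - 7 / 10 * Y - (7 / 10 * Y + 51 / 100 * Y * Z) * (Z * Z * (1 + Y * Y) / (1 + Z * Z)).

Lemma pf_sqr X Y Z : 0 < X -> 0 < Y -> 0 < Z ->
  pf (X * X) (Y * Y) (Z * Z)
  = 2 + (2 - 7 / 10 * Y) * (Y * Y / (1 + Y * Y)) + pweight Y Z * pslope Y Z
    - dstar (X * X) (Y * Y).
Proof.
  intros. unfold pf, kd0. rewrite (dstar_sqr Y Z) by lra.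
  rewrite (sqrt_mult (Y * Y) (Z * Z)), !sqrt_square by nra.
  unfold pweight, pslope, kd2. field. nra.
Qed.

Lemma pbase_ge Y : 0 < Y <= rho -> 1 / 50 <= pbase Y.
Proof.
  intros HY.
  assert (E : (pbase Y - 1 / 50) * ((1 + Y * Y) * (1 + Y * Y + rho * rho * (Y * Y)))
              = bern5 (Y / rho)).
  { unfold pbase, bern5. rewrite dstar_sqr by lra. unfold kd2. field. nra. }
  assert (Y / rho = 5000 / 6099 * Y) by field.
  assert (0 <= bern5 (Y / rho)) by (apply bern5_ge0; lra).
  assert (0 < (1 + Y * Y) * (1 + Y * Y + rho * rho * (Y * Y))) by nra.
  nra.
Qed.

Lemma pbase_pweight_ge Y : 0 < Y <= rho ->
  1 / 50 <= pbase Y + pweight Y rho * pslope Y rho.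
Proof.
  intros HY.
  assert (E : (pbase Y + pweight Y rho * pslope Y rho - 1 / 50)
              * ((1 + Y * Y) * (1 + Y * Y + rho * rho * (Y * Y))
                 * (1 + rho * rho) * (1 + rho * rho + Y * Y * (rho * rho)))
              = bern9 (Y / rho)).
  { unfold pbase, pweight, pslope, bern9. rewrite dstar_sqr by lra. unfold kd2. field. nra. }
  assert (Y / rho = 5000 / 6099 * Y) by field.
  assert (0 <= bern9 (Y / rho)) by (apply bern9_ge0; lra).
  assert (0 < (1 + Y * Y) * (1 + Y * Y + rho * rho * (Y * Y))
              * (1 + rho * rho) * (1 + rho * rho + Y * Y * (rho * rho))) by nra.
  nra.
Qed.

Lemma affine_ge_between c a b w W : c <= a -> c <= a + W * b -> 0 <= w <= W -> c <= a + w * b.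
Proof. intros. destruct (Rle_or_lt 0 b); nra. Qed.

Lemma pweight_monotone_r Y Z : 0 < Y -> 0 < Z <= rho -> pweight Y Z <= pweight Y rho.
Proof.
  intros. unfold pweight. apply Rdiv_le_cross; [nra | nra |].
  assert (0 <= (rho * rho - Z * Z) * (Y * Y * (1 + Y * Y))) by (apply Rmult_le_pos; nra).
  nra.
Qed.

Lemma pslope_antitone_r Y Z : 0 < Y -> 0 < Z <= rho -> pslope Y rho <= pslope Y Z.
Proof.
  intros. unfold pslope.
  assert (Z * Z * (1 + Y * Y) / (1 + Z * Z) <= rho * rho * (1 + Y * Y) / (1 + rho * rho)).
  { apply Rdiv_le_cross; [nra | nra |].
    assert (0 <= (rho * rho - Z * Z) * (1 + Y * Y)) by (apply Rmult_le_pos; nra).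
    nra. }
  assert (0 <= Z * Z * (1 + Y * Y) / (1 + Z * Z)) by (apply Rdiv_ge0; nra).
  assert (7 / 10 * Y + 51 / 100 * Y * Z <= 7 / 10 * Y + 51 / 100 * Y * rho) by nra.
  assert ((7 / 10 * Y + 51 / 100 * Y * Z) * (Z * Z * (1 + Y * Y) / (1 + Z * Z))
          <= (7 / 10 * Y + 51 / 100 * Y * rho) * (rho * rho * (1 + Y * Y) / (1 + rho * rho)))
    by (apply Rmult_le_compat; nra).
  lra.
Qed.

Lemma pf_sqr_ge X Y Z : 0 < X <= rho -> 0 < Y <= rho -> 0 < Z <= rho ->
  1 / 50 <= pf (X * X) (Y * Y) (Z * Z).
Proof.
  intros HX HY HZ. rewrite pf_sqr by lra.
  assert (dstar (X * X) (Y * Y) <= dstar (rho * rho) (Y * Y))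
    by (apply dstar_sqr_monotone_l; lra).
  assert (0 <= pweight Y Z) by (apply Rdiv_ge0; nra).
  assert (pweight Y Z * pslope Y rho <= pweight Y Z * pslope Y Z)
    by (apply Rmult_le_compat_l; [lra | apply pslope_antitone_r; lra]).
  assert (1 / 50 <= pbase Y + pweight Y Z * pslope Y rho).
  { apply (affine_ge_between _ _ _ _ (pweight Y rho)).
    - apply pbase_ge; lra.
    - apply pbase_pweight_ge; lra.
    - split; [lra | apply pweight_monotone_r; lra]. }
  unfold pbase in *. lra.
Qed.

Section StepRatioBounds.

Variable Re : R.
Hypothesis Re_pos : 0 < Re.
Hypothesis Re_root : Re_eq Re = 0.

Let sqrt_bounds x : 0 < x < Re -> 0 < sqrt x < sqrt Re.
Proof. intros. split; [apply sqrt_lt_R0 | apply sqrt_lt_1_alt]; lra. Qed.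

Lemma dstar_ge0 x y : 0 < x < Re -> 0 < y < Re -> 0 <= dstar x y.
Proof.
  intros Hx Hy. pose proof (sqrt_Re_lt Re Re_pos Re_root).
  pose proof (sqrt_bounds x Hx). pose proof (sqrt_bounds y Hy).
  rewrite <- (sqrt_sqrt x), <- (sqrt_sqrt y) by lra.
  apply dstar_sqr_ge0; lra.
Qed.

Lemma qf_ge0 x y z : 0 < x < Re -> 0 < y < Re -> 0 < z < Re -> 0 <= qf x y z.
Proof.
  intros Hx Hy Hz. pose proof (sqrt_Re_lt Re Re_pos Re_root).
  pose proof (sqrt_bounds x Hx). pose proof (sqrt_bounds y Hy). pose proof (sqrt_bounds z Hz).
  rewrite <- (sqrt_sqrt x), <- (sqrt_sqrt y), <- (sqrt_sqrt z) by lra.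
  apply (qf_sqr_ge0 (sqrt Re)); try lra.
  exact (Re_eq_sqrt Re Re_pos Re_root).
Qed.

Lemma pf_ge x y z : 0 < x < Re -> 0 < y < Re -> 0 < z < Re -> 1 / 50 <= pf x y z.
Proof.
  intros Hx Hy Hz. pose proof (sqrt_Re_lt Re Re_pos Re_root).
  pose proof (sqrt_bounds x Hx). pose proof (sqrt_bounds y Hy). pose proof (sqrt_bounds z Hz).
  rewrite <- (sqrt_sqrt x), <- (sqrt_sqrt y), <- (sqrt_sqrt z) by lra.
  apply pf_sqr_ge; lra.
Qed.

End StepRatioBounds.

Definition Gform (x y t t' a b : R) : R :=
  dstar x y * t * a ^ 2
  + sqrt (x * y) * kd2 x y * (7 / 10 * sqrt t * a - sqrt t' * b) ^ 2.

Definition Fform (x y z t t' t'' a b c : R) : R :=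
  pf x y z * t * a ^ 2
  + qf x y z * (7 / 10 * sqrt t * a - sqrt t' * b) ^ 2
  + sqrt (y * z) * kd2 y z * (sqrt t * a - 7 / 10 * sqrt t' * b + sqrt t'' * c) ^ 2.

Lemma energy_identity x y z t t' t'' a b c : 0 < t -> 0 < t' -> 0 < t'' ->
  y = t / t' -> z = t' / t'' ->
  2 * a * t * (kd0 y z * a + kd1 y z * b + kd2 y z * c)
  = Gform x y t t' a b - Gform y z t' t'' b c + Fform x y z t t' t'' a b c.
Proof.
  intros Ht Ht' Ht'' -> ->.
  unfold Gform, Fform, pf, qf.
  set (dx := dstar x (t / t')). set (kx := kd2 x (t / t')). set (sx := sqrt (x * (t / t'))).
  clearbody dx kx sx.
  unfold dstar, kd0, kd1, kd2.
  rewrite (sqrt_div t t') by lra.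
  replace (t / t' * (t' / t'')) with (t / t'') by (field; lra).
  rewrite (sqrt_div t t'') by lra.
  assert (HA : t = sqrt t * sqrt t) by (rewrite sqrt_sqrt; lra).
  assert (HB : t' = sqrt t' * sqrt t') by (rewrite sqrt_sqrt; lra).
  assert (HC : t'' = sqrt t'' * sqrt t'') by (rewrite sqrt_sqrt; lra).
  assert (0 < sqrt t) by (apply sqrt_lt_R0; lra).
  assert (0 < sqrt t') by (apply sqrt_lt_R0; lra).
  assert (0 < sqrt t'') by (apply sqrt_lt_R0; lra).
  set (A := sqrt t) in *. set (B := sqrt t') in *. set (C := sqrt t'') in *.
  clearbody A B C. subst t t' t''.
  field; lra.
Qed.

Lemma Gform_ge0 x y t t' a b : 0 <= dstar x y -> 0 <= kd2 x y -> 0 <= t ->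
  0 <= Gform x y t t' a b.
Proof.
  intros. unfold Gform.
  assert (0 <= sqrt (x * y) * kd2 x y) by (apply Rmult_le_pos; [apply sqrt_pos | lra]).
  apply Rplus_le_le_0_compat; apply Rmult_le_pos; try apply pow2_ge_0.
  - apply Rmult_le_pos; lra.
  - lra.
Qed.

Lemma Fform_ge x y z t t' t'' a b c : 1 / 50 <= pf x y z -> 0 <= qf x y z -> 0 <= kd2 y z ->
  0 <= t -> t / 50 * a ^ 2 <= Fform x y z t t' t'' a b c.
Proof.
  intros. unfold Fform. pose proof (sqrt_pos (y * z)).
  pose proof (pow2_ge_0 a).
  pose proof (pow2_ge_0 (7 / 10 * sqrt t * a - sqrt t' * b)).
  pose proof (pow2_ge_0 (sqrt t * a - 7 / 10 * sqrt t' * b + sqrt t'' * c)).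
  assert (0 <= sqrt (y * z) * kd2 y z) by (apply Rmult_le_pos; lra).
  assert (0 <= (pf x y z - 1 / 50) * t * a ^ 2)
    by (apply Rmult_le_pos; [apply Rmult_le_pos |]; lra).
  nra.
Qed.

Lemma Gfun_Gform tau n a b :
  Gfun tau n a b = Gform (ratio tau (S n)) (ratio tau n) (tau n) (tau (n - 1)%nat) a b.
Proof. reflexivity. Qed.

Lemma Ffun_Fform tau n a b c :
  Ffun tau n a b c
  = Fform (ratio tau (S n)) (ratio tau n) (ratio tau (n - 1)%nat)
      (tau n) (tau (n - 1)%nat) (tau (n - 2)%nat) a b c.
Proof. reflexivity. Qed.

Theorem lemma3p1 (Re : R)
  (hRe_pos : 0 < Re) (hRe_root : Re_eq Re = 0)
  (hRe_uniq : forall R0 : R, 0 < R0 -> Re_eq R0 = 0 -> R0 = Re)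
  (tau : nat -> R)
  (htau : forall k : nat, (1 <= k)%nat -> 0 < tau k)
  (hratio : forall k : nat, (2 <= k)%nat -> 0 < ratio tau k /\ ratio tau k < Re) :
  forall (n : nat), (3 <= n)%nat ->
  forall vn vn1 vn2 : R,
    2 * vn * tau n *
      (kd0 (ratio tau n) (ratio tau (n - 1)%nat) * vn
       + kd1 (ratio tau n) (ratio tau (n - 1)%nat) * vn1
       + kd2 (ratio tau n) (ratio tau (n - 1)%nat) * vn2)
    = Gfun tau n vn vn1 - Gfun tau (n - 1)%nat vn1 vn2 + Ffun tau n vn vn1 vn2
  /\ 0 <= Gfun tau n vn vn1
  /\ 0 <= Gfun tau (n - 1)%nat vn1 vn2
  /\ 0 <= Ffun tau n vn vn1 vn2
  /\ tau n / 50 * vn ^ 2 <= Ffun tau n vn vn1 vn2.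
Proof.
  intros n Hn vn vn1 vn2.
  rewrite !Gfun_Gform, Ffun_Fform.
  replace (S (n - 1)) with n by lia.
  replace (n - 1 - 1)%nat with (n - 2)%nat by lia.
  assert (Ez : ratio tau (n - 1) = tau (n - 1)%nat / tau (n - 2)%nat).
  { unfold ratio. replace (n - 1 - 1)%nat with (n - 2)%nat by lia. reflexivity. }
  pose proof (htau n ltac:(lia)). pose proof (htau (n - 1)%nat ltac:(lia)).
  pose proof (htau (n - 2)%nat ltac:(lia)).
  destruct (hratio (S n) ltac:(lia)) as [Hx0 HxRe].
  destruct (hratio n ltac:(lia)) as [Hy0 HyRe].
  destruct (hratio (n - 1)%nat ltac:(lia)) as [Hz0 HzRe].
  set (x := ratio tau (S n)) in *. set (y := ratio tau n) in *.
  set (z := ratio tau (n - 1)%nat) in *.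
  assert (HF : tau n / 50 * vn ^ 2
               <= Fform x y z (tau n) (tau (n - 1)%nat) (tau (n - 2)%nat) vn vn1 vn2).
  { apply Fform_ge; [apply (pf_ge Re) | apply (qf_ge0 Re) | apply kd2_ge0 |]; lra. }
  pose proof (pow2_ge_0 vn).
  split; [| split; [| split; [| split]]].
  - apply energy_identity; auto.
  - apply Gform_ge0; [apply (dstar_ge0 Re) | apply kd2_ge0 |]; lra.
  - apply Gform_ge0; [apply (dstar_ge0 Re) | apply kd2_ge0 |]; lra.
  - assert (0 <= tau n / 50 * vn ^ 2) by (apply Rmult_le_pos; [apply Rdiv_ge0 |]; lra).
    lra.
  - exact HF.
Qed.
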